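(* For every point $\varrho_K$ of $\mathcal{Q}(r,n)$ (with residue field $K$), the induced map on Zariski tangent spaces $$\imath_*:T_{\varrho_K}\mathcal{Q}(r,n)\to T_{\imath(\varrho_K)}\mathcal{A}(r,n)$$ is injective.
   Context: Fix $V_\infty=\mathbb{C}^r$ with basis $e_a$ and $A_re_a=e_{a+1}$, $e_{r+1}=0$. $\mathcal{Q}(r,n)$ is the fine moduli space of framed cyclic representations $(V,B_1,B_2,B_3,I,J)$ up to $GL(V)$. These have $\dim V=n$ and satisfy $[B_1,B_2]+IJ=0$, $JB_3=A_rJ$, $B_3I=IA_r$ and $[B_3,B_i]=0$ for $i=1,2$; moreover no proper nonzero $B_1,B_2,B_3$-invariant subspace contains $\mathrm{Im}\,I$. $\mathcal{A}(r,n)$ is the fine moduli space of stable ADHM data $(V,B_1,B_2,I,J)$ with $[B_1,B_2]+IJ=0$ and no proper $B_1,B_2$-invariant subspace containing $\mathrm{Im}\,I$. The map $\imath$ forgets $B_3$; it preserves residue fields. *)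

From HB Require Import structures.
From mathcomp Require Import all_boot all_order all_algebra.
Set Implicit Arguments. Unset Strict Implicit. Unset Printing Implicit Defensive.
Import GRing.Theory.
Local Open Scope ring_scope.

(* Convention: matrices act on COLUMN vectors, so composition of linear maps
   is matrix product in the usual order.  V = K^n, V_oo = K^r,
   B_i : 'M_n, I : V_oo -> V is 'M_(n,r), J : V -> V_oo is 'M_(r,n). *)

(* A_r e_a = e_(a+1), e_(r+1) = 0 : the (i,j) entry is 1 iff i = j+1. *)
Definition Ar (K : fieldType) (r : nat) : 'M[K]_r :=
  \matrix_(i < r, j < r) (((i : nat) == (j : nat).+1)%N)%:R.

Record cdatum (K : fieldType) (r n : nat) := CD {
  cB1 : 'M[K]_n; cB2 : 'M[K]_n; cB3 : 'M[K]_n;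
  cI : 'M[K]_(n, r); cJ : 'M[K]_(r, n) }.

Record adatum (K : fieldType) (r n : nat) := AD {
  aB1 : 'M[K]_n; aB2 : 'M[K]_n; aI : 'M[K]_(n, r); aJ : 'M[K]_(r, n) }.

Definition cforget (K : fieldType) r n (c : cdatum K r n) : adatum K r n :=
  AD (cB1 c) (cB2 c) (cI c) (cJ c).

Definition adhm_eq (K : fieldType) r n (a : adatum K r n) : Prop :=
  aB1 a *m aB2 a - aB2 a *m aB1 a + aI a *m aJ a = 0.

Definition cyclic_eq (K : fieldType) r n (c : cdatum K r n) : Prop :=
  [/\ adhm_eq (cforget c),
      cJ c *m cB3 c = Ar K r *m cJ c,
      cB3 c *m cI c = cI c *m Ar K r,
      cB3 c *m cB1 c - cB1 c *m cB3 c = 0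
    & cB3 c *m cB2 c - cB2 c *m cB3 c = 0].

Definition contains_ImI (K : fieldType) r n (I : 'M[K]_(n, r)) (U : {vspace 'cV[K]_n}) :=
  forall w : 'cV[K]_r, I *m w \in U.
Definition invariant (K : fieldType) n (B : 'M[K]_n) (U : {vspace 'cV[K]_n}) :=
  forall v, v \in U -> B *m v \in U.

Definition Q_stable (K : fieldType) r n (c : cdatum K r n) : Prop :=
  forall U : {vspace 'cV[K]_n},
    invariant (cB1 c) U -> invariant (cB2 c) U -> invariant (cB3 c) U ->
    contains_ImI (cI c) U -> U = 0%VS \/ U = fullv.

Definition A_stable (K : fieldType) r n (a : adatum K r n) : Prop :=
  forall U : {vspace 'cV[K]_n},
    invariant (aB1 a) U -> invariant (aB2 a) U ->
    contains_ImI (aI a) U -> U = fullv.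

(* ---------- matrices over the dual numbers K[eps]/(eps^2) ----------
   A matrix over K[eps] is written A0 + eps A1 and stored as (A0, A1). *)
Definition dmx (K : fieldType) (m n : nat) := ('M[K]_(m, n) * 'M[K]_(m, n))%type.
Definition dmul (K : fieldType) m n p (A : dmx K m n) (B : dmx K n p) : dmx K m p :=
  (A.1 *m B.1, A.1 *m B.2 + A.2 *m B.1).
Definition dadd (K : fieldType) m n (A B : dmx K m n) : dmx K m n := (A.1 + B.1, A.2 + B.2).
Definition dopp (K : fieldType) m n (A : dmx K m n) : dmx K m n := (- A.1, - A.2).
Definition dsub (K : fieldType) m n (A B : dmx K m n) : dmx K m n := dadd A (dopp B).
Definition dconst (K : fieldType) m n (A : 'M[K]_(m, n)) : dmx K m n := (A, 0).
Definition dzero (K : fieldType) m n : dmx K m n := (0, 0).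

(* families over Spec K[eps] (V = K[eps]^n free) *)
Record cfam (K : fieldType) (r n : nat) := CF {
  fB1 : dmx K n n; fB2 : dmx K n n; fB3 : dmx K n n;
  fI : dmx K n r; fJ : dmx K r n }.

Record afam (K : fieldType) (r n : nat) := AF {
  gB1 : dmx K n n; gB2 : dmx K n n; gI : dmx K n r; gJ : dmx K r n }.

Definition fforget (K : fieldType) r n (F : cfam K r n) : afam K r n :=
  AF (fB1 F) (fB2 F) (fI F) (fJ F).

Definition afam_eq (K : fieldType) r n (F : afam K r n) : Prop :=
  dadd (dsub (dmul (gB1 F) (gB2 F)) (dmul (gB2 F) (gB1 F))) (dmul (gI F) (gJ F))
  = dzero K n n.

Definition cfam_eq (K : fieldType) r n (F : cfam K r n) : Prop :=
  [/\ afam_eq (fforget F),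
      dmul (fJ F) (fB3 F) = dmul (dconst (Ar K r)) (fJ F),
      dmul (fB3 F) (fI F) = dmul (fI F) (dconst (Ar K r)),
      dsub (dmul (fB3 F) (fB1 F)) (dmul (fB1 F) (fB3 F)) = dzero K n n
    & dsub (dmul (fB3 F) (fB2 F)) (dmul (fB2 F) (fB3 F)) = dzero K n n].

Definition cfiber (K : fieldType) r n (F : cfam K r n) : cdatum K r n :=
  CD (fB1 F).1 (fB2 F).1 (fB3 F).1 (fI F).1 (fJ F).1.

(* isomorphism of families over K[eps]: g in GL_n(K[eps]) (i.e. g0 invertible)
   with B_i' = g B_i g^-1, I' = g I, J' = J g^-1 *)
Definition afam_iso (K : fieldType) r n (F F' : afam K r n) : Prop :=
  exists g : dmx K n n,
    [/\ g.1 \in unitmx,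
        dmul g (gB1 F) = dmul (gB1 F') g,
        dmul g (gB2 F) = dmul (gB2 F') g,
        dmul g (gI F) = gI F'
      & gJ F = dmul (gJ F') g].

Definition cfam_iso (K : fieldType) r n (F F' : cfam K r n) : Prop :=
  exists g : dmx K n n,
    g.1 \in unitmx /\
    dmul g (fB1 F) = dmul (fB1 F') g /\
    dmul g (fB2 F) = dmul (fB2 F') g /\
    dmul g (fB3 F) = dmul (fB3 F') g /\
    dmul g (fI F) = fI F' /\
    fJ F = dmul (fJ F') g.

From Pilot Require Import Defs.
From HB Require Import structures.
From mathcomp Require Import all_boot all_order all_algebra.
Set Implicit Arguments. Unset Strict Implicit. Unset Printing Implicit Defensive.
Import GRing.Theory.
Local Open Scope ring_scope.

(* Already the ADHM stability of rho forces an isomorphism between the ADHM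
   parts of two first-order deformations to be an infinitesimal gauge
   transformation 1 + eps g: its constant term commutes with B1, B2 and fixes
   Im I, so it is the identity.  Transporting F by 1 + eps g yields a family
   with the same ADHM part as F' whose B3 still satisfies the linearized
   equations; two solutions of those equations differ by an endomorphism
   commuting with B1, B2 and killing Im I, which vanishes by stability again. *)

Section Lie.

Variables (K : fieldType) (n : nat).
Implicit Types (X Y Z g : 'M[K]_n).

Definition lie X Y : 'M[K]_n := X *m Y - Y *m X.

Lemma lie_eq0 X Y : (lie X Y == 0) = comm_mxb X Y.
Proof. exact: subr_eq0. Qed.

Lemma lieDl X Y Z : lie (X + Y) Z = lie X Z + lie Y Z.
Proof. by rewrite /lie mulmxDl mulmxDr opprD addrACA. Qed.

Lemma lieDr X Y Z : lie X (Y + Z) = lie X Y + lie X Z.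
Proof. by rewrite /lie mulmxDl mulmxDr opprD addrACA. Qed.

Lemma lieBl X Y Z : lie (X - Y) Z = lie X Z - lie Y Z.
Proof. by rewrite lieDl /lie mulNmx mulmxN opprK opprB [- _ + _]addrC. Qed.

Lemma lier0 X : lie X 0 = 0.
Proof. by rewrite /lie mulmx0 mul0mx subrr. Qed.

Lemma lie_leibniz g X Y : lie g (lie X Y) = lie (lie g X) Y + lie X (lie g Y).
Proof.
rewrite /lie !mulmxBl !mulmxBr !mulmxA !opprB !addrA.
by rewrite [RHS](AC 8%AC ((1*8*3*6)*((2*5)*(4*7)))%AC) /= !addNr !addr0.
Qed.

Lemma lie_gauge g A B a b :
  lie A (b + lie g B) + lie (a + lie g A) B = lie A b + lie a B + lie g (lie A B).
Proof. by rewrite lieDr lieDl addrACA [in RHS]lie_leibniz [lie (lie g A) B + _]addrC. Qed.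

End Lie.

Section DualMatrices.

Variable K : fieldType.

Definition unip n (g : 'M[K]_n) : dmx K n n := (1%:M, g).

(* Conjugation by [unip g] = 1 + eps g, whose inverse is 1 - eps g. *)
Definition dconj n (g : 'M[K]_n) (X : dmx K n n) : dmx K n n := (X.1, X.2 + lie g X.1).

Lemma dmul_unipl m n (g : 'M[K]_m) (X : dmx K m n) :
  dmul (unip g) X = (X.1, X.2 + g *m X.1).
Proof. by rewrite /dmul /= !mul1mx. Qed.

Lemma dmul_unipr m n (g : 'M[K]_n) (X : dmx K m n) :
  dmul X (unip g) = (X.1, X.1 *m g + X.2).
Proof. by rewrite /dmul /= !mulmx1. Qed.

Lemma dmul_unip_conj n (g : 'M[K]_n) (X Y : dmx K n n) :
  dmul (unip g) X = dmul Y (unip g) <-> Y = dconj g X.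
Proof.
case: X Y => [X0 X1] [Y0 Y1]; rewrite dmul_unipl dmul_unipr /dconj /lie /=.
split=> [[<- eX] | [-> ->]]; congr pair; last by rewrite addrCA subrKC.
by rewrite addrA eX addrC addKr.
Qed.

Lemma dlieE n (X Y : dmx K n n) :
  dsub (dmul X Y) (dmul Y X) = (lie X.1 Y.1, lie X.1 Y.2 + lie X.2 Y.1).
Proof.
rewrite /dsub /dadd /dopp /dmul /lie /=; congr pair.
by rewrite opprD [- (Y.1 *m X.2) + _]addrC addrACA.
Qed.

Lemma dmul_const m n p (X : dmx K m n) (A : 'M[K]_(n, p)) :
  dmul X (dconst A) = (X.1 *m A, X.2 *m A).
Proof. by rewrite /dmul /dconst /= mulmx0 add0r. Qed.

End DualMatrices.

Lemma A_stable_commute_eq0 (K : fieldType) r n (a : adatum K r n) (M : 'M[K]_n) :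
  A_stable a -> comm_mx M (aB1 a) -> comm_mx M (aB2 a) -> M *m aI a = 0 -> M = 0.
Proof.
move=> stable_a cM1 cM2 MI0.
pose f := linfun (mulmx M : 'cV[K]_n -> 'cV[K]_n).
have invariant_ker B : comm_mx M B -> Defs.invariant B (lker f).
  by move=> cMB v; rewrite !memv_ker !lfunE /= mulmxA cMB -mulmxA => /eqP ->; rewrite mulmx0.
have ker_full : lker f = fullv.
  apply: stable_a; [exact: invariant_ker | exact: invariant_ker |].
  by move=> w; rewrite memv_ker lfunE /= mulmxA MI0 mul0mx.
apply/matrixP => i j.
have : delta_mx j (0 : 'I_1) \in lker f by rewrite ker_full memvf.
by rewrite memv_ker lfunE /= -colE => /eqP /matrixP /(_ i 0); rewrite !mxE.
Qed.

Section FirstOrderFamilies.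

Variables (K : fieldType) (r n : nat).
Implicit Types (F : cfam K r n) (g : 'M[K]_n).

Definition gauge g F : cfam K r n :=
  CF (dconj g (fB1 F)) (dconj g (fB2 F)) (dconj g (fB3 F))
     ((fI F).1, (fI F).2 + g *m (fI F).1) ((fJ F).1, (fJ F).2 - (fJ F).1 *m g).

(* The eps-parts of the equations of [cfam_eq] involving B3. *)
Definition tangent_B3_eqs F : Prop :=
  [/\ lie (fB3 F).1 (fB1 F).2 + lie (fB3 F).2 (fB1 F).1 = 0,
      lie (fB3 F).1 (fB2 F).2 + lie (fB3 F).2 (fB2 F).1 = 0
    & (fB3 F).1 *m (fI F).2 + (fB3 F).2 *m (fI F).1 = (fI F).2 *m Ar K r].

Lemma cfam_eq_tangent F : cfam_eq F -> tangent_B3_eqs F.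
Proof.
by case=> _ _; rewrite !dlieE !dmul_const /dmul => -[_ tI] [_ t1] [_ t2].
Qed.

Lemma cfam_iso_gauge g F : cfam_iso F (gauge g F).
Proof.
exists (unip g); split; first exact: unitmx1.
do 3!(split; first exact/dmul_unip_conj).
by rewrite dmul_unipl dmul_unipr /= subrKC -surjective_pairing.
Qed.

Lemma tangent_B3_eqs_gauge g F :
  cyclic_eq (cfiber F) -> tangent_B3_eqs F -> tangent_B3_eqs (gauge g F).
Proof.
case=> _ _ cI c1 c2 [t1 t2 tI]; split=> /=.
- by rewrite lie_gauge t1 add0r (congr1 (lie g) c1) lier0.
- by rewrite lie_gauge t2 add0r (congr1 (lie g) c2) lier0.
by rewrite mulmxDr mulmxDl addrACA tI mulmxBl -!mulmxA cI subrKC mulmxDl mulmxA.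
Qed.

Lemma afam_iso_gauge F F' :
  A_stable (cforget (cfiber F)) -> cfiber F' = cfiber F ->
  afam_iso (fforget F) (fforget F') -> exists g, fforget F' = fforget (gauge g F).
Proof.
case: F F' => [[B1 b1] [B2 b2] [B3 b3] [I i] [J j]] [[? b1'] [? b2'] [? b3'] [? i'] [? j']].
move=> /= stable [-> -> _ -> ->] [[g0 g] [/= _ eB1 eB2 eI eJ]].
have g0_1 : g0 = 1%:M.
  have comm_sub1 X : comm_mx g0 X -> comm_mx (g0 - 1%:M) X.
    by move=> c; apply: comm_mx_sym; apply: comm_mxB; [exact: comm_mx_sym | exact: comm_mx1].
  apply/eqP; rewrite -subr_eq0; apply/eqP/(A_stable_commute_eq0 stable) => /=.
  - exact/comm_sub1/(congr1 fst eB1).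
  - exact/comm_sub1/(congr1 fst eB2).
  by rewrite mulmxBl (congr1 fst eI : g0 *m I = I) mul1mx subrr.
subst g0; exists g.
move: eB1 eB2 eI eJ; rewrite -/(unip g) => /dmul_unip_conj -> /dmul_unip_conj ->.
rewrite dmul_unipl dmul_unipr /= => -[<-] [->].
by rewrite /gauge /= [J *m g + j']addrC addrK.
Qed.

Lemma tangent_B3_eqs_unique F F' :
  A_stable (cforget (cfiber F)) -> cfiber F' = cfiber F -> fforget F' = fforget F ->
  tangent_B3_eqs F -> tangent_B3_eqs F' -> F' = F.
Proof.
case: F F' => [[B1 b1] [B2 b2] [B3 b3] [I i] [J j]] [[? ?] [? ?] [? b3'] [? ?] [? ?]].
move=> /= stable [-> -> -> -> ->] [-> -> -> ->].
rewrite /tangent_B3_eqs /= => -[t1 t2 tI] [t1' t2' tI'].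
have same_tail (V : zmodType) (x y y' z : V) : x + y = z -> x + y' = z -> y' - y = 0.
  by move=> e e'; apply/eqP; rewrite subr_eq0; apply/eqP/(addrI x); rewrite e e'.
suff /eqP : b3' - b3 = 0 by rewrite subr_eq0 => /eqP ->.
apply: (A_stable_commute_eq0 stable) => /=.
- by apply/comm_mxP; rewrite -lie_eq0 lieBl (same_tail _ _ _ _ _ t1 t1').
- by apply/comm_mxP; rewrite -lie_eq0 lieBl (same_tail _ _ _ _ _ t2 t2').
by rewrite mulmxBl (same_tail _ _ _ _ _ tI tI').
Qed.

End FirstOrderFamilies.

Theorem lemma3p7 (K : fieldType) (r n : nat) (rho : cdatum K r n) :
  cyclic_eq rho -> Q_stable rho -> A_stable (cforget rho) ->
  forall F F' : cfam K r n,
    cfam_eq F -> cfam_eq F' -> cfiber F = rho -> cfiber F' = rho ->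
    afam_iso (fforget F) (fforget F') -> cfam_iso F F'.
Proof.
(* [Q_stable rho] follows from, and is superseded by, [A_stable (cforget rho)]. *)
move=> cyclic_rho _ stable_rho F F' eqF eqF' fibF fibF' isoFF'; subst rho.
have [g forgetF'] := afam_iso_gauge stable_rho fibF' isoFF'.
suff -> : F' = gauge g F by exact: cfam_iso_gauge.
apply: (tangent_B3_eqs_unique (F := gauge g F)) stable_rho fibF' forgetF' _ _.
- exact: tangent_B3_eqs_gauge cyclic_rho (cfam_eq_tangent eqF).
- exact: cfam_eq_tangent.
Qed.
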